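(* Let $d\geq 1$, let $\mathcal S=\{\sigma\in L(\mathbb C^d):\sigma\geq 0,\ \mathrm{Tr}(\sigma)=1\}$, and let $\mathrm d\rho$ be any probability measure on $\mathcal S$. Then $$\max_{\sigma\in\mathcal S}\mathbb E_\rho[F(\rho,\sigma)]\leq 1-\tfrac14\,\mathrm{Tr}\big(\mathbb E_\rho[\rho^2]-\mathbb E_\rho[\rho]^2\big).$$
   Context: The fidelity of $\rho,\sigma\in\mathcal S$ is $F(\rho,\sigma)=\big[\mathrm{Tr}\sqrt{\sqrt\rho\,\sigma\sqrt\rho}\big]^2$. $\mathbb E_\rho$ denotes expectation with respect to $\mathrm d\rho$. *)

From HB Require Import structures.
From mathcomp Require Import all_boot all_order all_algebra.
From mathcomp Require Import complex.
From mathcomp Require Import all_classical all_reals all_analysis.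
Set Implicit Arguments. Unset Strict Implicit. Unset Printing Implicit Defensive.
Import Order.TTheory GRing.Theory Num.Theory.
Local Open Scope ring_scope.
Local Open Scope classical_set_scope.

Section QDefs.
Variable R : realType.
Local Notation C := R[i].

Definition adjmx m n (M : 'M[C]_(m, n)) : 'M[C]_(n, m) := (map_mx Num.conj M)^T.

Definition psdmx n (M : 'M[C]_n) : Prop :=
  adjmx M = M /\ forall v : 'rV[C]_n, 0 <= (v *m M *m adjmx v) 0 0.

Definition densitymx n (M : 'M[C]_n) : Prop := psdmx M /\ \tr M = 1.

Definition sqrtmx n (M : 'M[C]_n) : 'M[C]_n :=
  xget 0 [set X : 'M[C]_n | psdmx X /\ X *m X = M].

(* fidelity F(rho,sigma) = (Tr sqrt(sqrt rho sigma sqrt rho))^2  (the trace is real) *)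
Definition fidelity n (rho sigma : 'M[C]_n) : R :=
  (complex.Re (\tr (sqrtmx (sqrtmx rho *m sigma *m sqrtmx rho)))) ^+ 2.

Definition Emx (dT : measure_display) (T : measurableType dT)
  (P : probability T R) n (X : T -> 'M[C]_n) : 'M[C]_n :=
  \matrix_(i, j) Complex (Rintegral P setT (fun w => complex.Re (X w i j)))
                         (Rintegral P setT (fun w => complex.Im (X w i j))).

Definition random_density (dT : measure_display) (T : measurableType dT) n
  (rho : T -> 'M[C]_n) : Prop :=
  (forall w, densitymx (rho w)) /\
  (forall i j, measurable_fun setT (fun w => complex.Re (rho w i j)) /\
               measurable_fun setT (fun w => complex.Im (rho w i j))).
End QDefs.

From HB Require Import structures.
From mathcomp Require Import all_boot all_order all_algebra.
From mathcomp Require Import complex.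
From mathcomp Require Import all_classical all_reals all_analysis.
From mathcomp Require Import ring lra.
Set Implicit Arguments. Unset Strict Implicit. Unset Printing Implicit Defensive.
Import Order.TTheory GRing.Theory Num.Theory.
Local Open Scope ring_scope.
Local Open Scope classical_set_scope.

(* Pointwise, F(rho, sigma) <= 1 - |rho - sigma|^2 / 4 for the Frobenius norm;
   averaging, and using that E |rho - sigma|^2 is minimised at sigma = E rho,
   gives E F <= 1 - (E |rho|^2 - |E rho|^2) / 4 = 1 - Tr (E rho^2 - (E rho)^2) / 4.

   For the pointwise bound write sqrt rho = D in a basis where it is diagonal,
   sigma = W W^*, and P = sqrt (D sigma D), so that F = (Tr P)^2.  With the
   pseudo-inverse D^+ and Y = P D^+ one has Tr P = <D, Y>, |D| = 1, and Y^* Y is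
   sigma compressed to the support of D.  The identity
   2 (D^2 - Y^* Y) = (D + Y)^* (D - Y) + (D - Y)^* (D + Y) and submultiplicativity
   give |D^2 - Y^* Y|^2 <= (1 + |Y|^2)^2 - 4 (Tr P)^2, and Cauchy-Schwarz for the
   Gram matrix sigma bounds what the compression discards by 1 - |Y|^4. *)

Section ComplexCoordinates.
Variable R : realType.
Local Open Scope complex_scope.
Local Notation C := R[i].
Local Notation Re := complex.Re.
Local Notation Im := complex.Im.
Implicit Types z w : C.

Lemma ReM z w : Re (z * w) = Re z * Re w - Im z * Im w.
Proof. by case: z => a b; case: w. Qed.

Lemma ImM z w : Im (z * w) = Re z * Im w + Im z * Re w.
Proof. by case: z => a b; case: w. Qed.

Lemma ReJ z : Re (Num.conj z) = Re z.
Proof. by case: z. Qed.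

Lemma ImJ z : Im (Num.conj z) = - Im z.
Proof. by case: z. Qed.

Lemma complex_ext z w : Re z = Re w -> Im z = Im w -> z = w.
Proof. by case: z => a b; case: w => c d /= -> ->. Qed.

Definition sqmod z : R := Re z ^+ 2 + Im z ^+ 2.

Lemma sqmod_ge0 z : 0 <= sqmod z.
Proof. by rewrite addr_ge0 // sqr_ge0. Qed.

Lemma sqmodJ z : sqmod (Num.conj z) = sqmod z.
Proof. by rewrite /sqmod ReJ ImJ sqrrN. Qed.

Lemma sqmodN z : sqmod (- z) = sqmod z.
Proof. by case: z => a b; rewrite /sqmod /= !sqrrN. Qed.

Lemma sqmod0 : sqmod 0 = 0.
Proof. by rewrite /sqmod /= expr0n addr0. Qed.

Lemma mulcJ z : z * Num.conj z = (sqmod z)%:C.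
Proof. by apply: complex_ext; rewrite ?ReM ?ImM ReJ ImJ /sqmod /=; ring. Qed.

Lemma sqmod_sum_le n (u v : 'I_n -> C) :
  sqmod (\sum_l u l * Num.conj (v l)) <= (\sum_l sqmod (u l)) * (\sum_l sqmod (v l)).
Proof.
pose u' : 'rV[C]_n := \row_l u l; pose v' : 'rV[C]_n := \row_l v l.
pose dot (x y : 'rV[C]_n) := \sum_l x 0 l * Num.conj (y 0 l).
have dotE x y : @dotmx C n x y = dot x y.
  by rewrite dotmxE mxE; apply: eq_bigr => l _; rewrite !mxE.
have : `|dot u' v'| ^+ 2 <= dot u' u' * dot v' v'.
  by rewrite -!dotE; exact: (CauchySchwarz (@dotmx C n) u' v').1.
rewrite /dot -add_Re2_Im2; under eq_bigr do rewrite !mxE.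
under [X in _ <= X * _]eq_bigr do rewrite !mxE mulcJ.
under [X in _ <= _ * X]eq_bigr do rewrite !mxE mulcJ.
by rewrite -!rmorph_sum -rmorphM lecR.
Qed.

End ComplexCoordinates.

Section FrobeniusGeometry.
Variable R : realType.
Local Open Scope complex_scope.
Local Notation C := R[i].
Local Notation Re := complex.Re.
Local Notation Im := complex.Im.
Local Notation ReL := (@complex.Re R : Rcomplex R -> R).
Local Notation ImL := (@complex.Im R : Rcomplex R -> R).

Lemma adjmxE m k (M : 'M[C]_(m, k)) i j : adjmx M i j = Num.conj (M j i).
Proof. by rewrite !mxE. Qed.

Lemma adjmxD m k (A B : 'M[C]_(m, k)) : adjmx (A + B) = adjmx A + adjmx B.
Proof. by apply/matrixP => i j; rewrite !mxE rmorphD. Qed.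

Lemma adjmxN m k (A : 'M[C]_(m, k)) : adjmx (- A) = - adjmx A.
Proof. by apply/matrixP => i j; rewrite !mxE rmorphN. Qed.

Lemma adjmxB m k (A B : 'M[C]_(m, k)) : adjmx (A - B) = adjmx A - adjmx B.
Proof. by rewrite adjmxD adjmxN. Qed.

Lemma adjmxM m k l (A : 'M[C]_(m, k)) (B : 'M[C]_(k, l)) :
  adjmx (A *m B) = adjmx B *m adjmx A.
Proof.
apply/matrixP => i j; rewrite !mxE rmorph_sum; apply: eq_bigr => r _.
by rewrite !mxE rmorphM mulrC.
Qed.

Lemma adjmxK m k (A : 'M[C]_(m, k)) : adjmx (adjmx A) = A.
Proof. by apply/matrixP => i j; rewrite !mxE conjCK. Qed.

Definition frob2 m k (M : 'M[C]_(m, k)) : R := \sum_i \sum_j sqmod (M i j).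

Definition frob_dot m k (X Y : 'M[C]_(m, k)) : R :=
  \sum_i \sum_j (Re (X i j) * Re (Y i j) + Im (X i j) * Im (Y i j)).

Lemma frob2_ge0 m k (M : 'M[C]_(m, k)) : 0 <= frob2 M.
Proof. by do 2![apply: sumr_ge0 => ? _]; exact: sqmod_ge0. Qed.

Lemma frob2D m k (X Y : 'M[C]_(m, k)) :
  frob2 (X + Y) = frob2 X + frob2 Y + 2 * frob_dot X Y.
Proof.
rewrite /frob2 /frob_dot mulr_sumr -!big_split; apply: eq_bigr => i _.
rewrite mulr_sumr -!big_split; apply: eq_bigr => j _.
by rewrite !mxE /sqmod (raddfD ReL) (raddfD ImL) /=; ring.
Qed.

Lemma frob_dotxx m k (X : 'M[C]_(m, k)) : frob_dot X X = frob2 X.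
Proof. by do 2![apply: eq_bigr => ? _]; rewrite /sqmod !expr2. Qed.

Lemma frob_dotN m k (X Y : 'M[C]_(m, k)) : frob_dot X (- Y) = - frob_dot X Y.
Proof.
rewrite /frob_dot -sumrN; apply: eq_bigr => i _; rewrite -sumrN.
by apply: eq_bigr => j _; rewrite !mxE (raddfN ReL) (raddfN ImL) /=; ring.
Qed.

Lemma frob2N m k (X : 'M[C]_(m, k)) : frob2 (- X) = frob2 X.
Proof. by do 2![apply: eq_bigr => ? _]; rewrite mxE sqmodN. Qed.

Lemma frob2_adj m k (M : 'M[C]_(m, k)) : frob2 (adjmx M) = frob2 M.
Proof.
rewrite /frob2 exchange_big; do 2![apply: eq_bigr => ? _].
by rewrite adjmxE sqmodJ.
Qed.

Lemma frob2_add_le m k (X Y : 'M[C]_(m, k)) :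
  frob2 (X + Y) <= 2 * frob2 X + 2 * frob2 Y.
Proof.
have := frob2D X (- Y); rewrite frob2N frob_dotN.
by have := frob2D X Y; have := frob2_ge0 (X - Y); lra.
Qed.

Lemma frob2_mul_le m k l (M : 'M[C]_(m, k)) (N : 'M[C]_(k, l)) :
  frob2 (M *m N) <= frob2 M * frob2 N.
Proof.
rewrite -[frob2 N]frob2_adj /frob2 mulr_suml; apply: ler_sum => i _.
rewrite mulr_sumr; apply: ler_sum => j _.
rewrite mxE (eq_bigr (fun r => M i r * Num.conj (adjmx N j r))); last first.
  by move=> r _; rewrite adjmxE conjCK.
exact: sqmod_sum_le.
Qed.

Lemma frob_dot_trace n (X Y : 'M[C]_n) : Re (\tr (adjmx X *m Y)) = frob_dot X Y.
Proof.
rewrite /frob_dot /mxtrace (raddf_sum ReL) exchange_big; apply: eq_bigr => i _.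
rewrite mxE (raddf_sum ReL); apply: eq_bigr => j _.
by rewrite adjmxE /= ReM ReJ ImJ; ring.
Qed.

Lemma frob2_trace n (M : 'M[C]_n) : frob2 M = Re (\tr (adjmx M *m M)).
Proof. by rewrite frob_dot_trace frob_dotxx. Qed.

(* From [2 (X^* X - Y^* Y) = (X + Y)^* (X - Y) + (X - Y)^* (X + Y)] and
   submultiplicativity of the Frobenius norm. *)
Lemma frob2_gram_sub_le n (X Y : 'M[C]_n) :
  frob2 (adjmx X *m X - adjmx Y *m Y) <=
  (frob2 X + frob2 Y + 2 * frob_dot X Y) * (frob2 X + frob2 Y - 2 * frob_dot X Y).
Proof.
set M := adjmx X *m X - adjmx Y *m Y.
have zmodE (V : zmodType) (p q r s : V) :
    (p - q + (r - s)) + (p + q + (- r - s)) = (p - s) + (p - s).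
  rewrite -opprD addrACA (addrACA p) addNr addr0 [RHS]addrACA; congr (_ + _).
  by rewrite opprD addrACA subrr add0r.
have splitM : adjmx (X + Y) *m (X - Y) + adjmx (X - Y) *m (X + Y) = M + M.
  by rewrite adjmxD adjmxB !(mulmxDl, mulmxDr, mulmxBl, mulmxBr, mulmxN, mulNmx) zmodE.
have frobMM : frob2 (M + M) = 4 * frob2 M by rewrite frob2D frob_dotxx; ring.
have frob_sum : frob2 (X + Y) = frob2 X + frob2 Y + 2 * frob_dot X Y.
  exact: frob2D.
have frob_diff : frob2 (X - Y) = frob2 X + frob2 Y - 2 * frob_dot X Y.
  by rewrite frob2D frob2N frob_dotN; ring.
have := frob2_add_le (adjmx (X + Y) *m (X - Y)) (adjmx (X - Y) *m (X + Y)).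
have := frob2_mul_le (adjmx (X + Y)) (X - Y).
have := frob2_mul_le (adjmx (X - Y)) (X + Y).
rewrite splitM frobMM !frob2_adj frob_sum frob_diff; lra.
Qed.

Lemma gramE n k (W : 'M[C]_(n, k)) i j :
  (W *m adjmx W) i j = \sum_l W i l * Num.conj (W j l).
Proof. by rewrite mxE; apply: eq_bigr => l _; rewrite adjmxE. Qed.

Lemma gram_diag n k (W : 'M[C]_(n, k)) i :
  (W *m adjmx W) i i = (\sum_l sqmod (W i l))%:C.
Proof. by rewrite gramE rmorph_sum; apply: eq_bigr => l _; rewrite mulcJ. Qed.

Lemma gram_diag_ge0 n k (W : 'M[C]_(n, k)) i : 0 <= Re ((W *m adjmx W) i i).
Proof. by rewrite gram_diag /=; apply: sumr_ge0 => l _; exact: sqmod_ge0. Qed.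

Lemma gram_cauchy_schwarz n k (W : 'M[C]_(n, k)) i j :
  sqmod ((W *m adjmx W) i j) <= Re ((W *m adjmx W) i i) * Re ((W *m adjmx W) j j).
Proof. by rewrite gramE !gram_diag; exact: sqmod_sum_le. Qed.

End FrobeniusGeometry.

Section PsdSqrt.
Variable R : realType.
Local Open Scope complex_scope.
Local Notation C := R[i].
Local Notation Re := complex.Re.

Definition rdiag n (a : 'I_n -> R) : 'M[C]_n := diag_mx (\row_i (a i)%:C).

Lemma rdiag_adj n (a : 'I_n -> R) : adjmx (rdiag a) = rdiag a.
Proof.
apply/matrixP => i j; rewrite !mxE; have [->|_] := eqVneq i j.
  by rewrite !mulr1n; apply: complex_ext; rewrite ?ReJ ?ImJ //= oppr0.
by rewrite !mulr0n rmorph0.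
Qed.

Lemma rdiag_mul n (a b : 'I_n -> R) : rdiag a *m rdiag b = rdiag (fun i => a i * b i).
Proof. by rewrite mulmx_diag; congr diag_mx; apply/rowP => i; rewrite !mxE rmorphM. Qed.

Lemma mxtrace_rdiag n (a : 'I_n -> R) : \tr (rdiag a) = (\sum_i a i)%:C.
Proof. by rewrite rmorph_sum; apply: eq_bigr => i _; rewrite !mxE eqxx mulr1n. Qed.

Lemma mul_rdiag_mx_rdiag n (b c : 'I_n -> R) (M : 'M[C]_n) :
  rdiag b *m M *m rdiag c = \matrix_(i, j) ((b i)%:C * M i j * (c j)%:C).
Proof. by apply/matrixP => i j; rewrite mul_mx_diag mul_diag_mx !mxE. Qed.

Lemma rdiag_form n (w : 'rV[C]_n) (a : 'I_n -> R) :
  (w *m rdiag a *m adjmx w) 0 0 = (\sum_l a l * sqmod (w 0 l))%:C.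
Proof.
rewrite mxE rmorph_sum; apply: eq_bigr => l _.
by rewrite mul_mx_diag !mxE mulrAC mulcJ -rmorphM mulrC.
Qed.

Lemma hermitian_unitary_diag n (A : 'M[C]_n) : adjmx A = A ->
  exists U : 'M[C]_n, exists a : 'I_n -> R,
   [/\ U *m adjmx U = 1%:M, adjmx U *m U = 1%:M & U *m A *m adjmx U = rdiag a].
Proof.
move=> hermA.
have adj_conjmx m k (M : 'M[C]_(m, k)) : adjmx M = (M ^t* )%sesqui.
  by apply/matrixP => i j; rewrite !mxE.
have hA : A \is hermsymmx.
  by apply/is_hermitianmxP; rewrite expr0 scale1r -adj_conjmx hermA.
have /orthomx_spectralP defA := hermitian_normalmx hA.
have unitU := spectral_unitarymx A.
have realD := hermitian_spectral_diag_real hA.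
set U := spectralmx A in defA unitU *; set D := spectral_diag A in defA realD *.
have UU' : U *m adjmx U = 1%:M by rewrite adj_conjmx; apply/unitarymxP.
exists U, (fun i => Re (D 0 i)); split; [done | exact: mulmx1C | ].
rewrite {1}defA invmx_unitary // -adj_conjmx !mulmxA UU' mul1mx -mulmxA UU' mulmx1.
apply/matrixP => i j; rewrite !mxE; case: (i == j) => //=.
by rewrite RRe_real //; exact: (mxOverP realD).
Qed.

Lemma psdmx_sqrt_exists n (M : 'M[C]_n) : psdmx M -> exists X, psdmx X /\ X *m X = M.
Proof.
move=> [hermM formM].
have [U [a [UU' U'U diagM]]] := hermitian_unitary_diag hermM.
have defM : M = adjmx U *m rdiag a *m U.
  by rewrite -diagM !mulmxA U'U mul1mx -mulmxA U'U mulmx1.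
have a_ge0 i : 0 <= a i.
  have := formM (delta_mx 0 i *m U).
  rewrite adjmxM !mulmxA -(mulmxA _ U) -(mulmxA _ _ (adjmx U)) diagM rdiag_form.
  rewrite (bigD1 i) //= big1 ?addr0; last first.
    by move=> j /negbTE neq_ji; rewrite mxE neq_ji /sqmod /= expr0n addr0 mulr0.
  by rewrite mxE !eqxx /sqmod /= expr1n expr0n addr0 mulr1 lecR.
pose S := rdiag (fun i => Num.sqrt (a i)).
exists (adjmx U *m S *m U); split; last first.
  rewrite defM -!mulmxA (mulmxA U) UU' mul1mx !mulmxA -(mulmxA _ S S) rdiag_mul.
  by congr (_ *m rdiag _ *m _); apply: funext => i; rewrite -expr2 sqr_sqrtr.
split; first by rewrite !adjmxM adjmxK rdiag_adj mulmxA.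
move=> v; have -> : v *m (adjmx U *m S *m U) *m adjmx v =
    (v *m adjmx U) *m S *m adjmx (v *m adjmx U) by rewrite adjmxM adjmxK !mulmxA.
rewrite rdiag_form lecR; apply: sumr_ge0 => l _.
by rewrite mulr_ge0 ?sqrtr_ge0 ?sqmod_ge0.
Qed.

Lemma sqrtmxP n (M : 'M[C]_n) : psdmx M ->
  psdmx (sqrtmx M) /\ sqrtmx M *m sqrtmx M = M.
Proof. by move=> psdM; exact: (xgetPex 0 (psdmx_sqrt_exists psdM)). Qed.

Lemma psdmx_congr n (A S : 'M[C]_n) : psdmx S -> adjmx A = A -> psdmx (A *m S *m A).
Proof.
move=> [hermS formS] hermA; split; first by rewrite !adjmxM hermA hermS mulmxA.
by move=> v; have := formS (v *m A); rewrite adjmxM hermA !mulmxA.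
Qed.

End PsdSqrt.

Section TraceBound.
Variable R : realType.
Local Open Scope complex_scope.
Local Notation C := R[i].
Local Notation Re := complex.Re.
Local Notation ReL := (@complex.Re R : Rcomplex R -> R).

Definition compress n (p : pred 'I_n) (M : 'M[C]_n) : 'M[C]_n :=
  \matrix_(i, j) (if p i && p j then M i j else 0).

Lemma sqr_sum n (F : 'I_n -> R) : (\sum_i F i) ^+ 2 = \sum_i \sum_j F i * F j.
Proof. by rewrite expr2 mulr_suml; apply: eq_bigr => i _; rewrite mulr_sumr. Qed.

(* Off the block [p x p] the diagonal part vanishes, so each entry there
   is controlled by Cauchy-Schwarz for the Gram matrix. *)
Lemma frob2_compress_le n k (W : 'M[C]_(n, k)) (p : pred 'I_n) (d : 'I_n -> R) :
  (forall i, ~~ p i -> d i = 0) ->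
  frob2 (rdiag d - W *m adjmx W) <=
  frob2 (rdiag d - compress p (W *m adjmx W)) +
  ((\sum_i Re ((W *m adjmx W) i i)) ^+ 2 - (\sum_(i | p i) Re ((W *m adjmx W) i i)) ^+ 2).
Proof.
move=> d_out; set G := W *m adjmx W.
have csG := gram_cauchy_schwarz W; rewrite -/G in csG; clearbody G.
rewrite [\sum_(i | p i) _]big_mkcond /= !sqr_sum -sumrB /frob2 -big_split /=.
apply: ler_sum => i _; rewrite -sumrB -big_split /=; apply: ler_sum => j _.
rewrite !mxE; have [<-{j}|_] := eqVneq i j.
  rewrite andbb; case pi: (p i); first by rewrite subrr addr0.
  by rewrite d_out ?pi // rmorph0 mul0rn sub0r mul0r !subr0 !sqmodN sqmod0 add0r csG.
rewrite /= mulr0n !sub0r; case: (p i); case: (p j); rewrite /= ?subrr ?addr0 //.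
all: by rewrite ?mulr0 ?mul0r subr0 !sqmodN sqmod0 add0r csG.
Qed.

Variables (n : nat) (a : 'I_n -> R) (W P : 'M[C]_n).
Hypotheses (a_norm : \sum_i a i ^+ 2 = 1)
  (W_norm : \sum_i Re ((W *m adjmx W) i i) = 1)
  (hermP : adjmx P = P)
  (sqrP : P *m P = rdiag a *m (W *m adjmx W) *m rdiag a).

Let G := W *m adjmx W.
Let p := [pred i | a i != 0].
(* [rdiag a^-1] is the pseudo-inverse of [rdiag a], thanks to [0^-1 = 0]. *)
Let Y := P *m rdiag (fun i => (a i)^-1).

Lemma mulVr_support i : (a i)^-1 * a i = (p i)%:R.
Proof. by rewrite inE; have [->|/mulVf] := eqVneq (a i) 0; rewrite ?invr0 ?mul0r. Qed.

Lemma pinv_gram : adjmx Y *m Y = compress p G.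
Proof.
rewrite adjmxM hermP rdiag_adj !mulmxA -(mulmxA _ P P) sqrP !mulmxA rdiag_mul.
rewrite -(mulmxA _ (rdiag a) (rdiag _)) rdiag_mul -(mulmxA _ W) mul_rdiag_mx_rdiag.
apply/matrixP => i j; rewrite !mxE mulVr_support (mulrC (a j)) mulVr_support.
by case: (p i); case: (p j); rewrite /= ?mul1r ?mulr1 ?mul0r ?mulr0.
Qed.

Lemma frob2_pinv : frob2 Y = \sum_(i | p i) Re (G i i).
Proof.
rewrite frob2_trace pinv_gram /mxtrace (raddf_sum ReL) [RHS]big_mkcond /=.
by apply: eq_bigr => i _; rewrite mxE andbb /=; case: (a i != 0).
Qed.

Lemma sqrt_diag_eq0 i : a i = 0 -> Re (P i i) = 0.
Proof.
move=> a_i0.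
have : (P *m adjmx P) i i = 0.
  by rewrite hermP sqrP mul_rdiag_mx_rdiag mxE a_i0 rmorph0 !mul0r.
rewrite gram_diag => /(congr1 ReL) /= /psumr_eq0P => /(_ (fun l _ => sqmod_ge0 _)).
move=> /(_ i isT) /eqP; rewrite paddr_eq0 ?sqr_ge0 // sqrf_eq0.
by case/andP => /eqP.
Qed.

Lemma frob_dot_pinv : frob_dot (rdiag a) Y = Re (\tr P).
Proof.
rewrite -frob_dot_trace rdiag_adj /Y mulmxA mxtrace_mulC mulmxA rdiag_mul.
rewrite /mxtrace !(raddf_sum ReL); apply: eq_bigr => i _.
rewrite mul_diag_mx !mxE /= ReM /= mul0r subr0 mulVr_support inE.
by have [/sqrt_diag_eq0 ->|] := eqVneq (a i) 0; rewrite ?mulr0 ?mul1r.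
Qed.

Lemma frob2_rdiag : frob2 (rdiag a) = 1.
Proof.
rewrite frob2_trace rdiag_adj rdiag_mul mxtrace_rdiag -a_norm.
by apply: eq_bigr => i _; rewrite expr2.
Qed.

Lemma trace_sqrt_bound :
  4 * Re (\tr P) ^+ 2 <= 4 - frob2 (rdiag a *m rdiag a - G).
Proof.
have support_le1 : \sum_(i | p i) Re (G i i) <= 1.
  rewrite -W_norm [leRHS](bigID p) /= lerDl.
  by apply: sumr_ge0 => i _; exact: gram_diag_ge0.
have a_out i : ~~ p i -> a i * a i = 0 by rewrite inE negbK => /eqP ->; rewrite mul0r.
have := frob2_compress_le W a_out; rewrite -rdiag_mul -/G W_norm expr1n.
have := frob2_gram_sub_le (rdiag a) Y.
rewrite rdiag_adj pinv_gram frob2_rdiag frob2_pinv frob_dot_pinv.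
by nra.
Qed.

End TraceBound.

Section FidelityBound.
Variable R : realType.
Local Open Scope complex_scope.
Local Notation C := R[i].
Local Notation Re := complex.Re.
Local Notation Im := complex.Im.
Local Notation ReL := (@complex.Re R : Rcomplex R -> R).

Lemma mxtrace_unitary_conj n (U M : 'M[C]_n) : adjmx U *m U = 1%:M ->
  \tr (U *m M *m adjmx U) = \tr M.
Proof. by move=> U'U; rewrite mxtrace_mulC mulmxA U'U mul1mx. Qed.

Lemma frob2_unitary_conj n (U M : 'M[C]_n) : adjmx U *m U = 1%:M ->
  frob2 (U *m M *m adjmx U) = frob2 M.
Proof.
move=> U'U; rewrite !frob2_trace !adjmxM adjmxK !mulmxA.
rewrite -(mulmxA _ (adjmx U) U) U'U mulmx1 -!mulmxA mulmxA.
by rewrite mulmxA -(mulmxA U) mxtrace_unitary_conj.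
Qed.

(* Conjugating by the unitary [U] diagonalising [sqrt rho] puts us in the
   setting of [trace_sqrt_bound], with [W = U sqrt sigma]. *)
Lemma fidelity_le n (rho sigma : 'M[C]_n) : densitymx rho -> densitymx sigma ->
  fidelity rho sigma <= 1 - 4^-1 * frob2 (rho - sigma).
Proof.
move=> [psd_rho tr_rho] [psd_sigma tr_sigma].
have [[hermA _] AA] := sqrtmxP psd_rho.
have [[hermB _] BB] := sqrtmxP psd_sigma.
set A := sqrtmx rho in hermA AA *; set B := sqrtmx sigma in hermB BB.
have [[hermP _] PP] := sqrtmxP (psdmx_congr psd_sigma hermA).
rewrite /fidelity -/A; set P := sqrtmx (A *m sigma *m A) in hermP PP *.
have [U [a [UU' U'U diagA]]] := hermitian_unitary_diag hermA.
have rhoU : rdiag a *m rdiag a = U *m rho *m adjmx U.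
  by rewrite -diagA -!mulmxA (mulmxA (adjmx U)) U'U mul1mx !mulmxA -(mulmxA _ A A) AA.
have sigmaU : (U *m B) *m adjmx (U *m B) = U *m sigma *m adjmx U.
  by rewrite adjmxM hermB !mulmxA -(mulmxA _ B B) BB.
have a_norm : \sum_i a i ^+ 2 = 1.
  have := congr1 (fun M => Re (\tr M)) rhoU.
  rewrite /= mxtrace_unitary_conj // tr_rho rdiag_mul mxtrace_rdiag /= => <-.
  by apply: eq_bigr => i _; rewrite expr2.
have sigma_norm : \sum_i Re ((U *m sigma *m adjmx U) i i) = 1.
  by rewrite -(raddf_sum ReL) -/(\tr _) mxtrace_unitary_conj // tr_sigma.
have hermPU : adjmx (U *m P *m adjmx U) = U *m P *m adjmx U.
  by rewrite !adjmxM adjmxK hermP mulmxA.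
have PU2 : (U *m P *m adjmx U) *m (U *m P *m adjmx U) =
    rdiag a *m (U *m sigma *m adjmx U) *m rdiag a.
  rewrite -diagA !mulmxA -(mulmxA _ (adjmx U) U) U'U mulmx1 -(mulmxA _ P P) PP.
  by rewrite -!(mulmxA _ (adjmx U) U) !U'U !mulmx1 !mulmxA.
rewrite -sigmaU in sigma_norm PU2.
have := trace_sqrt_bound a_norm sigma_norm hermPU PU2.
rewrite mxtrace_unitary_conj // rhoU sigmaU -mulmxBl -mulmxBr frob2_unitary_conj //.
lra.
Qed.

Lemma densitymx_sqmod_le1 n (rho : 'M[C]_n) i j : densitymx rho -> sqmod (rho i j) <= 1.
Proof.
move=> [psd_rho tr_rho]; have [[hermA _] AA] := sqrtmxP psd_rho.
have gram_rho : rho = sqrtmx rho *m adjmx (sqrtmx rho) by rewrite hermA AA.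
have diag_ge0 k : 0 <= Re (rho k k) by rewrite gram_rho gram_diag_ge0.
have diag_le1 k : Re (rho k k) <= 1.
  move/(congr1 ReL): tr_rho; rewrite /mxtrace (raddf_sum ReL) (bigD1 k) //= => <-.
  by rewrite lerDl sumr_ge0.
have := gram_cauchy_schwarz (sqrtmx rho) i j; rewrite -gram_rho => /le_trans; apply.
by rewrite -[1]mulr1 ler_pM.
Qed.

Lemma densitymx_entry_bound n (rho : 'M[C]_n) i j : densitymx rho ->
  `|Re (rho i j)| <= 1 /\ `|Im (rho i j)| <= 1.
Proof.
move=> /(densitymx_sqmod_le1 i j); rewrite /sqmod => le1.
have := sqr_ge0 (Re (rho i j)); have := sqr_ge0 (Im (rho i j)).
by split; rewrite ler_norml; apply/andP; split; nra.
Qed.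

End FidelityBound.

Section BoundedExpectation.
Import numFieldNormedType.Exports.
Context (R : realType) (dT : measure_display) (T : measurableType dT).
Variable P : probability T R.
Local Notation E f := (Rintegral P setT f).

Definition bounded_measurable (f : T -> R) :=
  measurable_fun setT f /\ exists M : R, forall w, `|f w| <= M.

Lemma bounded_measurable_integrable f :
  bounded_measurable f -> P.-integrable setT (EFin \o f).
Proof.
move=> [mf [M boundf]]; apply: measurable_bounded_integrable => //.
  by have /= -> := probability_setT P; rewrite ltry.
exists M; split; first exact: num_real.
by move=> y /ltW My w _; exact: le_trans (boundf w) My.
Qed.

Lemma bounded_measurable_cst c : bounded_measurable (fun _ => c).
Proof. by split; [exact: measurable_cst | exists `|c|]. Qed.

Lemma bounded_measurableD f g : bounded_measurable f -> bounded_measurable g ->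
  bounded_measurable (fun w => f w + g w).
Proof.
move=> [mf [M boundf]] [mg [N boundg]]; split; first exact: measurable_realfun.measurable_funD.
by exists (M + N) => w; exact: le_trans (ler_normD _ _) (lerD (boundf w) (boundg w)).
Qed.

Lemma bounded_measurableN f : bounded_measurable f -> bounded_measurable (fun w => - f w).
Proof.
move=> [mf [M boundf]]; split; first exact: measurableT_comp.
by exists M => w; rewrite normrN.
Qed.

Lemma bounded_measurableB f g : bounded_measurable f -> bounded_measurable g ->
  bounded_measurable (fun w => f w - g w).
Proof. by move=> bf bg; apply: bounded_measurableD => //; exact: bounded_measurableN. Qed.

Lemma bounded_measurableM f g : bounded_measurable f -> bounded_measurable g ->
  bounded_measurable (fun w => f w * g w).
Proof.
move=> [mf [M boundf]] [mg [N boundg]]; split; first exact: measurable_realfun.measurable_funM.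
by exists (M * N) => w; rewrite normrM ler_pM.
Qed.

Lemma bounded_measurable_sqr f : bounded_measurable f ->
  bounded_measurable (fun w => f w ^+ 2).
Proof. by move=> bf; under eq_fun do rewrite expr2; exact: bounded_measurableM. Qed.

Lemma bounded_measurable_sqr_subr f c : bounded_measurable f ->
  bounded_measurable (fun w => (f w - c) ^+ 2).
Proof.
move=> bf; apply/bounded_measurable_sqr/bounded_measurableB => //.
exact: bounded_measurable_cst.
Qed.

Lemma bounded_measurable_sum I (s : seq I) (F : I -> T -> R) :
  (forall i, bounded_measurable (F i)) ->
  bounded_measurable (fun w => \sum_(i <- s) F i w).
Proof.
move=> bF; elim: s => [|i s IH].
  by under eq_fun do rewrite big_nil; exact: bounded_measurable_cst.
by under eq_fun do rewrite big_cons; exact: bounded_measurableD.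
Qed.

Lemma Rintegral_bmD f g : bounded_measurable f -> bounded_measurable g ->
  E (fun w => f w + g w) = E f + E g.
Proof. by move=> bf bg; rewrite RintegralD // bounded_measurable_integrable. Qed.

Lemma Rintegral_bmB f g : bounded_measurable f -> bounded_measurable g ->
  E (fun w => f w - g w) = E f - E g.
Proof. by move=> bf bg; rewrite RintegralB // bounded_measurable_integrable. Qed.

Lemma Rintegral_bmZl c f : bounded_measurable f -> E (fun w => c * f w) = c * E f.
Proof. by move=> bf; rewrite RintegralZl // bounded_measurable_integrable. Qed.

Lemma Rintegral_probability_cst c : E (fun _ => c) = c.
Proof. by rewrite Rintegral_cst //; have /= -> := probability_setT P; rewrite mulr1. Qed.

Lemma Rintegral_bm_sum I (s : seq I) (F : I -> T -> R) :
  (forall i, bounded_measurable (F i)) ->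
  E (fun w => \sum_(i <- s) F i w) = \sum_(i <- s) E (F i).
Proof.
move=> bF; elim: s => [|i s IH].
  by under eq_Rintegral do rewrite big_nil; rewrite big_nil Rintegral_probability_cst.
under eq_Rintegral do rewrite big_cons.
by rewrite Rintegral_bmD ?IH ?big_cons //; exact: bounded_measurable_sum.
Qed.

Lemma variance_le_Rintegral_sqr_sub f c : bounded_measurable f ->
  E (fun w => f w ^+ 2) - E f ^+ 2 <= E (fun w => (f w - c) ^+ 2).
Proof.
move=> bf.
have bf2 := bounded_measurable_sqr bf.
have bcf : bounded_measurable (fun w => 2 * c * f w).
  by apply: bounded_measurableM => //; exact: bounded_measurable_cst.
have -> : (fun w => (f w - c) ^+ 2) = (fun w => (f w ^+ 2 - 2 * c * f w) + c ^+ 2).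
  by apply: funext => w; ring.
rewrite Rintegral_bmD; last exact: bounded_measurable_cst; last exact: bounded_measurableB.
rewrite Rintegral_bmB // Rintegral_bmZl // Rintegral_probability_cst.
by have := sqr_ge0 (E f - c); lra.
Qed.

(* [f] need not be measurable (the fidelity is not known to be), so the
   comparison goes through the supremum over simple functions below [f]. *)
Lemma Rintegral_le_bm f g : bounded_measurable g ->
  (forall w, 0 <= f w) -> (forall w, f w <= g w) -> E f <= E g.
Proof.
move=> bg f_ge0 fg.
have intg := integrable_fin_num measurableT (bounded_measurable_integrable bg).
have le_fg : (\int[P]_x (f x)%:E <= \int[P]_x (g x)%:E)%E.
  have f_ge0E x : (0 <= (f x)%:E)%E by rewrite lee_fin.
  have g_ge0E x : (0 <= (g x)%:E)%E by rewrite lee_fin (le_trans (f_ge0 x)).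
  rewrite !ge0_integralTE //.
  apply: ereal_sup_le => _ [h hf <-]; exists h => //= x.
  by apply: le_trans (hf x) _; rewrite lee_fin.
have intf_ge0 : (0 <= \int[P]_x (f x)%:E)%E.
  by apply: integral_ge0 => x _; rewrite lee_fin.
apply: fine_le => //; rewrite ge0_fin_numE //.
apply: le_lt_trans (le_fg) _; rewrite -ge0_fin_numE //.
exact: le_trans intf_ge0 le_fg.
Qed.

End BoundedExpectation.

Section RandomDensity.
Context (R : realType) (dT : measure_display) (T : measurableType dT).
Variables (P : probability T R) (n : nat) (rho : T -> 'M[R[i]]_n).
Hypothesis rho_random : random_density rho.
Local Open Scope complex_scope.
Local Notation E f := (Rintegral P setT f).
Local Notation Re := complex.Re.
Local Notation Im := complex.Im.
Local Notation ReL := (@complex.Re R : Rcomplex R -> R).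
Local Notation ImL := (@complex.Im R : Rcomplex R -> R).

Lemma random_density_Re i j : bounded_measurable (fun w => Re (rho w i j)).
Proof.
split; first exact: (rho_random.2 i j).1.
by exists 1 => w; exact: (densitymx_entry_bound i j (rho_random.1 w)).1.
Qed.

Lemma random_density_Im i j : bounded_measurable (fun w => Im (rho w i j)).
Proof.
split; first exact: (rho_random.2 i j).2.
by exists 1 => w; exact: (densitymx_entry_bound i j (rho_random.1 w)).2.
Qed.

Lemma random_density_adj w : adjmx (rho w) = rho w.
Proof. exact: (rho_random.1 w).1.1. Qed.

Lemma frob2_random_density_sub (sigma : 'M[R[i]]_n) w :
  frob2 (rho w - sigma) = \sum_i \sum_j
    ((Re (rho w i j) - Re (sigma i j)) ^+ 2 + (Im (rho w i j) - Im (sigma i j)) ^+ 2).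
Proof. by do 2![apply: eq_bigr => ? _]; rewrite !mxE /sqmod (raddfB ReL) (raddfB ImL). Qed.

Lemma bounded_measurable_entry_sqr_sub (sigma : 'M[R[i]]_n) i j :
  bounded_measurable (fun w =>
    (Re (rho w i j) - Re (sigma i j)) ^+ 2 + (Im (rho w i j) - Im (sigma i j)) ^+ 2).
Proof.
by apply: bounded_measurableD; apply: bounded_measurable_sqr_subr;
  [exact: random_density_Re | exact: random_density_Im].
Qed.

Lemma bounded_measurable_frob2_sub (sigma : 'M[R[i]]_n) :
  bounded_measurable (fun w => frob2 (rho w - sigma)).
Proof.
under eq_fun do rewrite frob2_random_density_sub.
by do 2![apply: bounded_measurable_sum => ?]; exact: bounded_measurable_entry_sqr_sub.
Qed.

Lemma Rintegral_frob2_sub (sigma : 'M[R[i]]_n) :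
  E (fun w => frob2 (rho w - sigma)) = \sum_i \sum_j
    (E (fun w => (Re (rho w i j) - Re (sigma i j)) ^+ 2) +
     E (fun w => (Im (rho w i j) - Im (sigma i j)) ^+ 2)).
Proof.
under eq_Rintegral do rewrite frob2_random_density_sub.
rewrite Rintegral_bm_sum => [|i]; last first.
  by apply: bounded_measurable_sum => j; exact: bounded_measurable_entry_sqr_sub.
apply: eq_bigr => i _; rewrite Rintegral_bm_sum => [|j]; last first.
  exact: bounded_measurable_entry_sqr_sub.
by apply: eq_bigr => j _; rewrite Rintegral_bmD //; apply: bounded_measurable_sqr_subr;
  [exact: random_density_Re | exact: random_density_Im].
Qed.

Lemma trace_Emx_variance :
  Re (\tr (Emx P (fun w => rho w *m rho w) - Emx P rho *m Emx P rho)) =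
  \sum_i \sum_j
    ((E (fun w => Re (rho w i j) ^+ 2) - E (fun w => Re (rho w i j)) ^+ 2) +
     (E (fun w => Im (rho w i j) ^+ 2) - E (fun w => Im (rho w i j)) ^+ 2)).
Proof.
rewrite /mxtrace (raddf_sum ReL); apply: eq_bigr => i _.
rewrite mxE [X in _ + X]mxE (raddfD ReL) (raddfN ReL) /=.
under eq_bigr do rewrite addrACA -opprD.
rewrite sumrB; congr (_ - _).
  rewrite mxE /=; under eq_Rintegral do rewrite -{2}random_density_adj gram_diag /=.
  rewrite Rintegral_bm_sum => [|j]; last first.
    exact: bounded_measurableD (bounded_measurable_sqr (random_density_Re _ _))
                               (bounded_measurable_sqr (random_density_Im _ _)).
  apply: eq_bigr => j _; rewrite Rintegral_bmD //.
  - exact: bounded_measurable_sqr (random_density_Re _ _).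
  - exact: bounded_measurable_sqr (random_density_Im _ _).
rewrite mxE (raddf_sum ReL); apply: eq_bigr => j _.
have conj_ji w : rho w j i = Num.conj (rho w i j).
  by rewrite -[in LHS]random_density_adj adjmxE.
have E_Re_ji : E (fun w => Re (rho w j i)) = E (fun w => Re (rho w i j)).
  by apply: eq_Rintegral => w _; rewrite conj_ji ReJ.
have E_Im_ji : E (fun w => Im (rho w j i)) = - E (fun w => Im (rho w i j)).
  rewrite -mulN1r -Rintegral_bmZl; last exact: random_density_Im.
  by apply: eq_Rintegral => w _; rewrite conj_ji ImJ mulN1r.
by rewrite !mxE E_Re_ji E_Im_ji /=; ring.
Qed.

Lemma trace_Emx_variance_le (sigma : 'M[R[i]]_n) :
  Re (\tr (Emx P (fun w => rho w *m rho w) - Emx P rho *m Emx P rho)) <=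
  E (fun w => frob2 (rho w - sigma)).
Proof.
rewrite trace_Emx_variance Rintegral_frob2_sub.
apply: ler_sum => i _; apply: ler_sum => j _.
by apply: lerD; apply: variance_le_Rintegral_sqr_sub;
  [exact: random_density_Re | exact: random_density_Im].
Qed.

End RandomDensity.

Theorem theorem2 (R : realType) (d : nat) (hd : (1 <= d)%N)
  (dT : measure_display) (T : measurableType dT) (P : probability T R)
  (rho : T -> 'M[R[i]]_d) (hrho : random_density rho) :
  forall sigma : 'M[R[i]]_d, densitymx sigma ->
    Rintegral P setT (fun w => fidelity (rho w) sigma)
    <= 1 - 4^-1 * complex.Re (\tr (Emx P (fun w => rho w *m rho w)
                                    - Emx P rho *m Emx P rho)).
Proof.
move=> sigma sigma_density.
have bm_one := bounded_measurable_cst T (1 : R).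
have bm_frob2 := bounded_measurable_frob2_sub hrho sigma.
have bm_scaled : bounded_measurable (fun w => 4^-1 * frob2 (rho w - sigma)).
  exact: bounded_measurableM (bounded_measurable_cst T _) bm_frob2.
have bm_bound := bounded_measurableB bm_one bm_scaled.
apply: le_trans; first apply: (Rintegral_le_bm P bm_bound).
- by move=> w; exact: sqr_ge0.
- by move=> w; apply: fidelity_le => //; exact: hrho.1.
rewrite Rintegral_bmB // Rintegral_probability_cst Rintegral_bmZl //.
by have := trace_Emx_variance_le P hrho sigma; lra.
Qed.
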